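(* Let $(S,\wedge,\vee)$ be a skew lattice that is both strongly distributive and co-strongly distributive. Then $S$ is a strong distributive solution of the Yang–Baxter equation, and the associated map $r(x,y)=(x\wedge y,x\vee y)$ satisfies $r^3=r$.
   Context: A skew lattice is a set $S$ with two binary operations $\wedge,\vee$, each idempotent and associative, satisfying the absorption laws $x\wedge(x\vee y)=x=x\vee(x\wedge y)$ and $(x\wedge y)\vee y=y=(x\vee y)\wedge y$ for all $x,y\in S$. $S$ is strongly distributive if it satisfies $(x\vee y)\wedge z=(x\wedge z)\vee(y\wedge z)$ and $x\wedge(y\vee z)=(x\wedge y)\vee(x\wedge z)$; it is co-strongly distributive if it satisfies $(x\wedge y)\vee z=(x\vee z)\wedge(y\vee z)$ and $x\vee(y\wedge z)=(x\vee y)\wedge(x\vee z)$. A map $r:X\times X\to X\times X$ is a set-theoretic solution of the Yang–Baxter equation if $(r\times\mathrm{id})\circ(\mathrm{id}\times r)\circ(r\times\mathrm{id})=(\mathrm{id}\times r)\circ(r\times\mathrm{id})\circ(\mathrm{id}\times r)$. A skew lattice $S$ is a strong distributive solution if the map $r(x,y)=(x\wedge y,x\vee y)$ on $S\times S$ is a set-theoretic solution of the Yang–Baxter equation. *)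

Definition is_skew_lattice {S : Type} (meet join : S -> S -> S) : Prop :=
  (forall x, meet x x = x) /\ (forall x, join x x = x) /\
  (forall x y z, meet x (meet y z) = meet (meet x y) z) /\
  (forall x y z, join x (join y z) = join (join x y) z) /\
  (forall x y, meet x (join x y) = x) /\
  (forall x y, join x (meet x y) = x) /\
  (forall x y, join (meet x y) y = y) /\
  (forall x y, meet (join x y) y = y).

Definition strongly_distributive {S : Type} (meet join : S -> S -> S) : Prop :=
  (forall x y z, meet (join x y) z = join (meet x z) (meet y z)) /\
  (forall x y z, meet x (join y z) = join (meet x y) (meet x z)).

Definition co_strongly_distributive {S : Type} (meet join : S -> S -> S) : Prop :=
  (forall x y z, join (meet x y) z = meet (join x z) (join y z)) /\
  (forall x y z, join x (meet y z) = meet (join x y) (join x z)).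

Definition r12 {X : Type} (r : X * X -> X * X) (t : X * X * X) : X * X * X :=
  let '(a, b, c) := t in let '(a', b') := r (a, b) in (a', b', c).

Definition r23 {X : Type} (r : X * X -> X * X) (t : X * X * X) : X * X * X :=
  let '(a, b, c) := t in let '(b', c') := r (b, c) in (a, b', c').

Definition is_YB_solution {X : Type} (r : X * X -> X * X) : Prop :=
  forall t, r12 r (r23 r (r12 r t)) = r23 r (r12 r (r23 r t)).

Definition skew_map {S : Type} (meet join : S -> S -> S) (p : S * S) : S * S :=
  (meet (fst p) (snd p), join (fst p) (snd p)).

Definition strong_distributive_solution {S : Type} (meet join : S -> S -> S) : Prop :=
  is_YB_solution (skew_map meet join).


(* Write x ⊓ y for meet and x ⊔ y for join.  Unfolding the
   Yang-Baxter equation for r(x, y) = (x ⊓ y, x ⊔ y) on a triple (a, b, c)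
   leaves three identities, one per component:
     (1) a ⊓ b ⊓ (a ⊔ b) ⊓ c = a ⊓ b ⊓ c,
     (2) a ⊓ b ⊔ (a ⊔ b) ⊓ c = (a ⊔ b ⊓ c) ⊓ (b ⊔ c),
     (3) a ⊔ b ⊔ c = a ⊔ b ⊓ c ⊔ (b ⊔ c),
   and r^3 = r similarly reduces to two identities in a and b.
   The key structural fact is that strong distributivity makes the meet
   band normal: a ⊓ x ⊓ y ⊓ b = a ⊓ y ⊓ x ⊓ b.  The axioms of a skew lattice
   are self-dual under exchanging meet and join, and this exchange turns
   strong distributivity into co-strong distributivity, so the same lemma
   applied to (join, meet) shows that the join band is normal too.
   Normality of meet gives (1) and the first half of r^3 = r, normality of
   join gives (3) and the second half, while (2) follows from the
   distributive laws alone. *)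

Section MeetNormality.

Variables (S : Type) (meet join : S -> S -> S).
Local Infix "⊓" := meet (at level 40, left associativity).
Local Infix "⊔" := join (at level 50, left associativity).

Hypothesis meet_assoc : forall x y z, x ⊓ (y ⊓ z) = x ⊓ y ⊓ z.
Hypothesis absorb_meet_l : forall x y, x ⊓ (x ⊔ y) = x.
Hypothesis absorb_meet_r : forall x y, (x ⊔ y) ⊓ y = y.
Hypothesis distr_l : forall x y z, x ⊓ (y ⊔ z) = x ⊓ y ⊔ x ⊓ z.
Hypothesis distr_r : forall x y z, (x ⊔ y) ⊓ z = x ⊓ z ⊔ y ⊓ z.

(* A repeated factor may be dropped from the left of its second occurrence:
   prefix x ⊓ (x ⊔ z), which is x, and note that (x ⊔ z) ⊓ y ⊓ z ⊓ y = z ⊓ y. *)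
Lemma meet_right_normal x y z : x ⊓ y ⊓ z ⊓ y = x ⊓ z ⊓ y.
Proof.
  assert (absorb_zy : (x ⊔ z) ⊓ y ⊓ z ⊓ y = z ⊓ y).
  { rewrite <- (meet_assoc ((x ⊔ z) ⊓ y) z y), distr_r. apply absorb_meet_r. }
  transitivity (x ⊓ ((x ⊔ z) ⊓ y ⊓ z ⊓ y)).
  - now rewrite !meet_assoc, absorb_meet_l.
  - now rewrite absorb_zy, meet_assoc.
Qed.

(* The mirror image: a repeated factor may be dropped from the right of its
   second occurrence, using x ⊓ y ⊓ x ⊓ (y ⊔ z) = x ⊓ y. *)
Lemma meet_left_normal x y z : x ⊓ y ⊓ x ⊓ z = x ⊓ y ⊓ z.
Proof.
  assert (absorb_xy : x ⊓ y ⊓ x ⊓ (y ⊔ z) = x ⊓ y).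
  { rewrite <- (meet_assoc (x ⊓ y) x (y ⊔ z)), distr_l. apply absorb_meet_l. }
  transitivity (x ⊓ y ⊓ x ⊓ ((y ⊔ z) ⊓ z)).
  - now rewrite absorb_meet_r.
  - now rewrite !meet_assoc, absorb_xy.
Qed.

Lemma meet_normal a x y b : a ⊓ x ⊓ y ⊓ b = a ⊓ y ⊓ x ⊓ b.
Proof.
  transitivity (a ⊓ (x ⊓ y ⊓ x ⊓ b)).
  - now rewrite meet_left_normal, !meet_assoc.
  - now rewrite !meet_assoc, meet_right_normal.
Qed.

End MeetNormality.

Section SkewMapSolution.

Variables (S : Type) (meet join : S -> S -> S).
Local Infix "⊓" := meet (at level 40, left associativity).
Local Infix "⊔" := join (at level 50, left associativity).

Hypothesis meet_idem : forall x, x ⊓ x = x.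
Hypothesis join_idem : forall x, x ⊔ x = x.
Hypothesis meet_assoc : forall x y z, x ⊓ (y ⊓ z) = x ⊓ y ⊓ z.
Hypothesis join_assoc : forall x y z, x ⊔ (y ⊔ z) = x ⊔ y ⊔ z.
Hypothesis absorb_meet_l : forall x y, x ⊓ (x ⊔ y) = x.
Hypothesis absorb_join_l : forall x y, x ⊔ x ⊓ y = x.
Hypothesis absorb_join_r : forall x y, x ⊓ y ⊔ y = y.
Hypothesis absorb_meet_r : forall x y, (x ⊔ y) ⊓ y = y.
Hypothesis distr_l : forall x y z, x ⊓ (y ⊔ z) = x ⊓ y ⊔ x ⊓ z.
Hypothesis distr_r : forall x y z, (x ⊔ y) ⊓ z = x ⊓ z ⊔ y ⊓ z.
Hypothesis codistr_l : forall x y z, x ⊔ y ⊓ z = (x ⊔ y) ⊓ (x ⊔ z).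
Hypothesis codistr_r : forall x y z, x ⊓ y ⊔ z = (x ⊔ z) ⊓ (y ⊔ z).

Let normal_meet a x y b : a ⊓ x ⊓ y ⊓ b = a ⊓ y ⊓ x ⊓ b.
Proof. apply (meet_normal S meet join); assumption. Qed.

(* The join band is normal: the same lemma with meet and join exchanged,
   co-strong distributivity being strong distributivity of the dual. *)
Let normal_join a x y b : a ⊔ x ⊔ y ⊔ b = a ⊔ y ⊔ x ⊔ b.
Proof. apply (meet_normal S join meet); assumption. Qed.

Lemma meet_join_cancel x y z : x ⊓ y ⊓ (x ⊔ y) ⊓ z = x ⊓ y ⊓ z.
Proof. now rewrite normal_meet, absorb_meet_l. Qed.

Lemma join_meet_cancel z x y : z ⊔ x ⊓ y ⊔ x ⊔ y = z ⊔ x ⊔ y.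
Proof. now rewrite normal_join, <- (join_assoc z x), absorb_join_l. Qed.

(* x ⊓ y is absorbed when joined on the right of (x ⊓ y) ⊓ (x ⊔ y), because
   the latter expands to x ⊓ y ⊓ x ⊔ x ⊓ y. *)
Lemma meet_join_absorbs_meet x y : x ⊓ y ⊓ (x ⊔ y) ⊔ x ⊓ y = x ⊓ y ⊓ (x ⊔ y).
Proof.
  rewrite distr_l, <- (meet_assoc x y y), meet_idem, <- join_assoc, join_idem.
  reflexivity.
Qed.

(* The middle component of the Yang-Baxter equation: both sides equal
   a ⊓ (b ⊔ c) ⊔ b ⊓ c. *)
Lemma yang_baxter_middle a b c :
  a ⊓ b ⊔ (a ⊔ b) ⊓ c = (a ⊔ b ⊓ c) ⊓ (b ⊔ c).
Proof.
  assert (absorb_bc :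
    (a ⊔ b ⊓ c) ⊓ (b ⊔ c) ⊔ b ⊓ c = (a ⊔ b ⊓ c) ⊓ (b ⊔ c)).
  { rewrite (distr_r a (b ⊓ c) (b ⊔ c)), <- join_assoc, meet_join_absorbs_meet.
    reflexivity. }
  rewrite (distr_r a b c), join_assoc, <- (distr_l a b c),
    (codistr_r a (b ⊔ c) (b ⊓ c)), (distr_l (a ⊔ b ⊓ c) (b ⊔ c) (b ⊓ c)),
    (absorb_meet_r a (b ⊓ c)).
  exact absorb_bc.
Qed.

Lemma skew_map_yang_baxter : is_YB_solution (skew_map meet join).
Proof.
  intros [[a b] c]. unfold r12, r23, skew_map; simpl.
  rewrite yang_baxter_middle, !meet_assoc, !join_assoc,
    meet_join_cancel, join_meet_cancel.
  reflexivity.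
Qed.

Lemma skew_map_cube p :
  skew_map meet join (skew_map meet join (skew_map meet join p))
  = skew_map meet join p.
Proof.
  destruct p as [a b]. unfold skew_map; simpl.
  rewrite meet_join_cancel, absorb_meet_l, !join_assoc, join_meet_cancel,
    <- join_assoc, absorb_join_r.
  reflexivity.
Qed.

End SkewMapSolution.

Theorem mainTheorem6 (S : Type) (meet join : S -> S -> S) :
  is_skew_lattice meet join ->
  strongly_distributive meet join ->
  co_strongly_distributive meet join ->
  strong_distributive_solution meet join /\
  (forall p : S * S,
     skew_map meet join (skew_map meet join (skew_map meet join p))
     = skew_map meet join p).
Proof.
  intros (meet_idem & join_idem & meet_assoc & join_assoc &
          absorb_meet_l & absorb_join_l & absorb_join_r & absorb_meet_r)
         [distr_r distr_l] [codistr_r codistr_l].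
  split.
  - apply (skew_map_yang_baxter S meet join); assumption.
  - apply (skew_map_cube S meet join); assumption.
Qed.
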